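(* Let $b$ and $c$ be integers with $b > c > 1$, let $m = 2b+c$, and let $f(x) = x^{2b+c} + x^{b+c} + x^{b} + x^{c} + 1 \in \mathbb{F}_2[x]$. There is a fixed, input-independent straight-line program using no AND operations and exactly $6b+3c-2 = 3m-2$ two-input XOR operations, of XOR depth $3$ (i.e. time delay $3T_X$), which, on input the coefficient bits $d_0,\dots,d_{2m-2}$ of an arbitrary polynomial $D(x)=\sum_{i=0}^{2m-2} d_i x^i \in \mathbb{F}_2[x]$ of degree at most $2m-2$, outputs the $m$ coefficient bits of the remainder of $D$ upon division by $f$ (the unique polynomial of degree less than $m$ congruent to $D$ modulo $f$).
   Context: A straight-line program (bit-parallel circuit) over $\mathbb{F}_2$ here is a sequence of gates, each computing the XOR (sum in $\mathbb{F}_2$) of two values that are either input bits or outputs of earlier gates; each output bit is an input bit or a gate output. The number of XOR operations is the number of gates. $T_X$ denotes the delay of one 2-input XOR gate, and the time delay of the program is $T_X$ times the maximum number of gates on any path from an input to an output. *)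

From mathcomp Require Import all_boot all_order all_algebra.
Set Implicit Arguments. Unset Strict Implicit. Unset Printing Implicit Defensive.
Import GRing.Theory.
Local Open Scope ring_scope.

(* A straight-line program over F_2 with [n] inputs.
   Wires are numbered by nat: wires 0 .. n-1 are the input bits, wire n+k is
   the output of gate k.  Gate k is a pair (i, j) of wires and computes
   wire_i + wire_j (XOR); it may only use inputs or earlier gates. *)
Record slp := SLP { slp_gates : seq (nat * nat); slp_outs : seq nat }.

Definition slp_wf (n : nat) (P : slp) : Prop :=
  (forall k, (k < size (slp_gates P))%N ->
     let g := nth (0%N, 0%N) (slp_gates P) k in
     (g.1 < n + k)%N /\ (g.2 < n + k)%N) /\
  (forall o, o \in slp_outs P -> (o < n + size (slp_gates P))%N).

Definition slp_xors (P : slp) : nat := size (slp_gates P).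

Definition slp_wires (n : nat) (P : slp) (x : nat -> 'F_2) : seq 'F_2 :=
  foldl (fun vs g => rcons vs (nth 0 vs g.1 + nth 0 vs g.2))
        [seq x i | i <- iota 0 n] (slp_gates P).

Definition slp_out (n : nat) (P : slp) (x : nat -> 'F_2) (j : nat) : 'F_2 :=
  nth 0 (slp_wires n P x) (nth 0%N (slp_outs P) j).

Definition slp_wire_depths (n : nat) (P : slp) : seq nat :=
  foldl (fun ds g => rcons ds (maxn (nth 0%N ds g.1) (nth 0%N ds g.2)).+1)
        (nseq n 0%N) (slp_gates P).

(* XOR depth of the program: max over outputs of the wire depth;
   time delay = slp_depth * T_X *)
Definition slp_depth (n : nat) (P : slp) : nat :=
  \max_(o <- slp_outs P) nth 0%N (slp_wire_depths n P) o.

Definition pentanomial (b c : nat) : {poly 'F_2} :=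
  'X^(2 * b + c) + 'X^(b + c) + 'X^b + 'X^c + 1.

(* Write h_k for the input bit d_(m+k), which is zero for k >= m - 1.  Since
   x^m = x^(b+c) + x^b + x^c + 1 modulo f, the quotient of D by f has the
   coefficients q_i = h_i + h_(i+b) + h_(i+b+c), and the j-th remainder bit is
   d_j + q_j + q_(j-c) + q_(j-b) + q_(j-b-c), terms with a negative index being
   absent.  Over F_2 the repeated h's cancel, and the remaining sums share
   subterms: a first layer computes the b sums h_k + h_(k+b) and the b - 1 sums
   h_i + h_(i+b+c); a second layer adds one first-layer value or high bit to
   every d_j and forms c - 1 sums of two first-layer values; a third layer adds
   to each of the m sums d_j + ... a first-layer value or one of these c - 1
   sums.  This gives (2b - 1) + (m + c - 1) + m = 6b + 3c - 2 XORs in depth 3. *)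

From HB Require Import structures.
From mathcomp Require Import all_boot all_order all_algebra.
From mathcomp Require Import zify ring.
Set Implicit Arguments. Unset Strict Implicit. Unset Printing Implicit Defensive.
Import GRing.Theory.
Local Open Scope ring_scope.

Lemma nth_map_index (T1 : eqType) (T2 : Type) (f : T1 -> T2) d s x :
  x \in s -> nth d (map f s) (index x s) = f x.
Proof. by move=> xs; rewrite (nth_map x) ?index_mem ?nth_index. Qed.

Inductive xexpr : Type := XIn of nat | XXor of xexpr & xexpr.

Definition xexpr_eq_dec : comparable xexpr.
Proof. rewrite /comparable /decidable; decide equality; exact: eq_comparable. Defined.
HB.instance Definition _ := hasDecEq.Build xexpr (compareP xexpr_eq_dec).

Section Eval.
Variables (T : Type) (op : T -> T -> T) (leaf : nat -> T).
Fixpoint xeval (e : xexpr) : T :=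
  match e with XIn i => leaf i | XXor a b => op (xeval a) (xeval b) end.
End Eval.

Definition xdepth : xexpr -> nat := xeval (fun a b => (maxn a b).+1) (fun=> 0%N).

Lemma xdepthE e1 e2 : xdepth (XXor e1 e2) = (maxn (xdepth e1) (xdepth e2)).+1.
Proof. by []. Qed.

Definition xor_over (ws : seq xexpr) (e : xexpr) : bool :=
  if e is XXor a b then (a \in ws) && (b \in ws) else false.

Fixpoint xor_sorted (ws es : seq xexpr) : bool :=
  if es is e :: es' then xor_over ws e && xor_sorted (rcons ws e) es' else true.

Lemma xor_over_sub ws ws' e : {subset ws <= ws'} -> xor_over ws e -> xor_over ws' e.
Proof. by case: e => // a b sub /andP[/sub a_ws /sub b_ws]; apply/andP. Qed.

Lemma xor_sorted_cat ws es1 es2 :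
  xor_sorted ws (es1 ++ es2) = xor_sorted ws es1 && xor_sorted (ws ++ es1) es2.
Proof.
elim: es1 ws => [|e es1 IH] ws /=; first by rewrite cats0.
by rewrite IH cat_rcons andbA.
Qed.

Lemma xor_sorted_layer ws es : all (xor_over ws) es -> xor_sorted ws es.
Proof.
elim: es ws => [|e es IH] ws //= /andP[-> /allP es_ws]; apply: IH.
apply/allP => e' /es_ws; apply: xor_over_sub => w.
by rewrite mem_rcons inE orbC => ->.
Qed.

Lemma xor_sorted_nth ws es k : xor_sorted ws es -> (k < size es)%N ->
  xor_over (ws ++ take k es) (nth (XIn 0) es k).
Proof.
elim: es ws k => [|e es IH] ws [|k] //= /andP[e_ws es_ws] k_lt; first by rewrite cats0.
by rewrite -cat_rcons; apply: IH.
Qed.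

Definition xor_gate (ws : seq xexpr) (e : xexpr) : nat * nat :=
  if e is XXor a b then (index a ws, index b ws) else (0%N, 0%N).

Definition xor_inputs (n : nat) : seq xexpr := [seq XIn i | i <- iota 0 n].

Lemma mem_xor_inputs n i : (XIn i \in xor_inputs n) = (i < n)%N.
Proof. by rewrite mem_map ?mem_iota // => ? ? []. Qed.

(* Operands are located by their first occurrence among the wires, so an
   expression computed twice is harmless. *)
Definition slp_of_xors (n : nat) (es outs : seq xexpr) : slp :=
  let ws := xor_inputs n ++ es in
  SLP [seq xor_gate ws e | e <- es] [seq index o ws | o <- outs].

(* Both [slp_wires] and [slp_wire_depths] are such a fold: for (op, leaf) equal
   to (+, x) and to (fun a b => (maxn a b).+1, 0) respectively. *)
Lemma foldl_xor_gate (T : Type) (op : T -> T -> T) (leaf : nat -> T) d ws es :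
  xor_sorted ws es ->
  foldl (fun vs g => rcons vs (op (nth d vs g.1) (nth d vs g.2)))
        [seq xeval op leaf w | w <- ws] [seq xor_gate (ws ++ es) e | e <- es] =
  [seq xeval op leaf w | w <- ws ++ es].
Proof.
elim: es ws => [|e es IH] ws /=; first by rewrite cats0.
case: e => // a b /andP[/andP[a_ws b_ws] es_sorted].
rewrite /= !index_cat a_ws b_ws !nth_map_index //.
by rewrite -[op _ _]/(xeval op leaf (XXor a b)) -map_rcons -cat_rcons IH.
Qed.

Section SlpOfXors.
Variables (n : nat) (es outs : seq xexpr).
Hypotheses (es_sorted : xor_sorted (xor_inputs n) es)
           (outs_wires : {subset outs <= xor_inputs n ++ es}).
Let P := slp_of_xors n es outs.

Lemma slp_of_xors_wf : slp_wf n P.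
Proof.
split=> [k|o]; rewrite /= ?size_map => k_lt.
  rewrite (nth_map (XIn 0)) //.
  set pre := xor_inputs n ++ take k es.
  have -> : xor_inputs n ++ es = pre ++ drop k es by rewrite -catA cat_take_drop.
  have index_pre w : w \in pre -> (index w (pre ++ drop k es) < n + k)%N.
    have <- : size pre = (n + k)%N by rewrite size_cat size_map size_iota size_take k_lt.
    by move=> w_pre; rewrite index_cat w_pre index_mem.
  case: (nth _ es k) (xor_sorted_nth es_sorted k_lt) => // a b.
  by case/andP=> /index_pre ? /index_pre.
case/mapP: k_lt => w /outs_wires w_ws ->.
by rewrite -index_mem size_cat size_map size_iota in w_ws.
Qed.

Lemma slp_of_xors_out x j : (j < size outs)%N ->
  slp_out n P x j = xeval +%R x (nth (XIn 0) outs j).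
Proof.
move=> j_lt; rewrite /slp_out /slp_wires /= (nth_map (XIn 0)) //.
have -> : [seq x i | i <- iota 0 n] = [seq xeval +%R x w | w <- xor_inputs n].
  by rewrite -map_comp.
by rewrite foldl_xor_gate // nth_map_index // outs_wires ?mem_nth.
Qed.

Lemma slp_of_xors_depth : slp_depth n P = \max_(o <- outs) xdepth o.
Proof.
rewrite /slp_depth /slp_wire_depths /= big_map.
have -> : nseq n 0%N = [seq xdepth w | w <- xor_inputs n].
  by rewrite -map_comp -[in LHS](size_iota 0 n); elim: (iota 0 n) => //= i s <-.
rewrite foldl_xor_gate //; apply: eq_big_seq => o /outs_wires.
exact: nth_map_index.
Qed.

End SlpOfXors.

Section Reducer.
Variables b c : nat.
Local Notation m := (2 * b + c)%N.
Local Open Scope nat_scope.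

Definition high k := XIn (m + k).
Definition sum_b k := XXor (high k) (high (k + b)).
(* For i >= b - 1 the partner bit d_(m+i+b+c) lies beyond the degree bound
   2m - 2 of the input, so it is dropped. *)
Definition sum_bc i := if i < b - 1 then XXor (high i) (high (i + (b + c))) else high i.
Definition low_term j :=
  if j < c then high (j + (b + c))
  else if j < b + c then sum_b (j - c)
  else if j < b + 2 * c - 1 then high (j + b - c)
  else sum_bc (j - (b + c)).
Definition low_sum j := XXor (XIn j) (low_term j).
Definition cross_sum j := XXor (sum_bc (j - (b + c))) (sum_bc (j - b)).
Definition top_term j :=
  if j < c then sum_b j
  else if j < b then sum_bc j
  else if b + c <= j < b + 2 * c - 1 then cross_sum j
  else sum_bc (j - b).
Definition out_sum j := XXor (low_sum j) (top_term j).

Definition layer1 := [seq sum_b k | k <- iota 0 b] ++ [seq sum_bc i | i <- iota 0 (b - 1)].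
Definition layer2 :=
  [seq low_sum j | j <- iota 0 m] ++ [seq cross_sum j | j <- iota (b + c) (c - 1)].
Definition layer3 := [seq out_sum j | j <- iota 0 m].

Definition pent_reducer : slp :=
  slp_of_xors (2 * m - 1) (layer1 ++ layer2 ++ layer3) layer3.

Hypotheses (hcb : c < b) (hc : 1 < c).
Local Notation inputs := (xor_inputs (2 * m - 1)).

Lemma high_in k : k < m - 1 -> high k \in inputs.
Proof. by rewrite mem_xor_inputs; lia. Qed.

Lemma sum_b_in k : k < b -> sum_b k \in inputs ++ layer1.
Proof. by move=> k_lt; rewrite !mem_cat (map_f sum_b) ?orbT ?mem_iota. Qed.

Lemma sum_bc_in i : i < m - 1 -> sum_bc i \in inputs ++ layer1.
Proof.
move=> i_lt; case: (ltnP i (b - 1)) => i_b.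
  by rewrite !mem_cat (map_f sum_bc) ?orbT ?mem_iota.
by rewrite /sum_bc ltnNge i_b mem_cat high_in.
Qed.

Lemma low_term_in j : j < m -> low_term j \in inputs ++ layer1.
Proof.
move=> j_lt; rewrite /low_term.
case: ifP => ?; first by rewrite mem_cat high_in //; lia.
case: ifP => ?; first by rewrite sum_b_in //; lia.
case: ifP => ?; first by rewrite mem_cat high_in //; lia.
by rewrite sum_bc_in //; lia.
Qed.

Lemma top_term_in j : j < m -> top_term j \in inputs ++ layer1 ++ layer2.
Proof.
move=> j_lt; rewrite catA mem_cat /top_term.
case: ifP => ?; first by rewrite sum_b_in //; lia.
case: ifP => ?; first by rewrite sum_bc_in //; lia.
case: ifP => [/andP[? ?]|_]; last by rewrite sum_bc_in //; lia.
by rewrite !mem_cat (map_f cross_sum) ?orbT // mem_iota; lia.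
Qed.

Lemma pent_reducer_sorted : xor_sorted inputs (layer1 ++ layer2 ++ layer3).
Proof.
have layer1_over : all (xor_over inputs) layer1.
  rewrite all_cat; apply/andP; split; apply/allP => e /mapP[k];
    rewrite mem_iota => /andP[_ k_lt] ->.
    by rewrite /= !high_in //; lia.
  by rewrite /sum_bc ifT //= !high_in //; lia.
have layer2_over : all (xor_over (inputs ++ layer1)) layer2.
  rewrite all_cat; apply/andP; split; apply/allP => e /mapP[j];
    rewrite mem_iota => /andP[j_ge j_lt] ->.
    by rewrite /= low_term_in ?mem_cat ?mem_xor_inputs ?andbT //; lia.
  by rewrite /= !sum_bc_in //; lia.
have layer3_over : all (xor_over (inputs ++ layer1 ++ layer2)) layer3.
  apply/allP => e /mapP[j]; rewrite mem_iota => /andP[_ j_lt] ->.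
  by rewrite /= top_term_in // !mem_cat (map_f low_sum) ?orbT ?mem_iota.
rewrite xor_sorted_cat [xor_sorted _ (layer2 ++ _)]xor_sorted_cat -catA.
by rewrite !xor_sorted_layer.
Qed.

Let layer3_wires : {subset layer3 <= inputs ++ layer1 ++ layer2 ++ layer3}.
Proof. by move=> e e_in; rewrite !mem_cat e_in !orbT. Qed.

Lemma pent_reducer_wf : slp_wf (2 * m - 1) pent_reducer.
Proof. exact: slp_of_xors_wf pent_reducer_sorted layer3_wires. Qed.

Lemma pent_reducer_xors : slp_xors pent_reducer = 6 * b + 3 * c - 2.
Proof. by rewrite /slp_xors /= size_map !size_cat !size_map !size_iota; lia. Qed.

Lemma pent_reducer_out x j : j < m ->
  slp_out (2 * m - 1) pent_reducer x j = xeval +%R x (out_sum j).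
Proof.
move=> j_lt; rewrite (slp_of_xors_out pent_reducer_sorted layer3_wires) ?size_map ?size_iota //.
by rewrite (nth_map 0) ?size_iota // nth_iota.
Qed.

Lemma xdepth_sum_bc i : xdepth (sum_bc i) <= 1.
Proof. by rewrite /sum_bc; case: ifP. Qed.

Lemma xdepth_low_term j : xdepth (low_term j) <= 1.
Proof. by rewrite /low_term; do 3 case: ifP => _ //; apply: xdepth_sum_bc. Qed.

Lemma xdepth_top_term j : xdepth (top_term j) <= 2.
Proof.
rewrite /top_term; repeat case: ifP => _ //; try exact: leq_trans (xdepth_sum_bc _) _.
by rewrite xdepthE ltnS geq_max !xdepth_sum_bc.
Qed.

Lemma xdepth_out_sum j : xdepth (out_sum j) <= 3.
Proof.
by rewrite /out_sum /low_sum !xdepthE !(ltnS, geq_max) xdepth_low_term xdepth_top_term.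
Qed.

(* For j < c both summands of out_sum j have depth 1; the first output whose
   low_sum goes through the first layer is j = c. *)
Lemma xdepth_out_sum_c : xdepth (out_sum c) = 3.
Proof.
apply/eqP; rewrite eqn_leq xdepth_out_sum /out_sum /low_sum /low_term ltnn ifT; last by lia.
by rewrite !xdepthE /= ltnS leq_maxl.
Qed.

Lemma pent_reducer_depth : slp_depth (2 * m - 1) pent_reducer = 3.
Proof.
rewrite (slp_of_xors_depth pent_reducer_sorted layer3_wires).
apply/eqP; rewrite eqn_leq; apply/andP; split.
  by apply/bigmax_leqP_seq => _ /mapP[j _ ->] _; apply: xdepth_out_sum.
rewrite -xdepth_out_sum_c; apply: (bigmaxn_sup_seq (out_sum c)) => //.
by rewrite (map_f out_sum) // mem_iota; lia.
Qed.

End Reducer.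

Lemma addr0_eq_pchar2 (R : nzRingType) (x y : R) : 2 \in [pchar R] -> x + y = 0 -> x = y.
Proof. by move=> R2 /eqP; rewrite addr_eq0 oppr_pchar2 // => /eqP. Qed.

Lemma mulrn_even_pchar2 (R : nzRingType) :
  2 \in [pchar R] -> forall (x : R) n, ~~ odd n -> x *+ n = 0.
Proof.
move=> R2 x n n_even; rewrite -(odd_double_half n) (negbTE n_even) add0n -mul2n mulrnA.
by rewrite (mulrn_pchar R2) mul0rn.
Qed.

Ltac pick_summand S :=
  match S with
  | ?a + ?b => match constr:(tt) with
               | _ => pick_summand a
               | _ => pick_summand b
               end
  | 0 => fail 1
  | _ => S
  end.

Ltac count_summand t S :=
  lazymatch S with
  | t => constr:(1%N)
  | ?a + ?b => let x := count_summand t a in let y := count_summand t b in constr:((x + y)%N)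
  | _ => constr:(0%N)
  end.

(* Proves [lhs = rhs] in characteristic 2 when every summand occurs an even
   number of times in [lhs + rhs]: each summand is split off as a multiple by
   [ring] and then erased. *)
Ltac pchar2_cancel R2 :=
  apply: (addr0_eq_pchar2 R2);
  repeat lazymatch goal with |- ?S = 0 =>
    let t := pick_summand S in
    let n := count_summand t S in
    let n := eval compute in n in
    let G := eval pattern t in S in
    lazymatch G with ?F _ =>
      rewrite (_ : S = F 0 + t *+ n); [|by rewrite /=; ring];
      rewrite /= (mulrn_even_pchar2 R2) ?addr0 //
    end end;
  ring.

Ltac split_ifs :=
  repeat match goal with |- context [if ?cond then _ else _] =>
    case: (boolP cond) => ?; try (exfalso; lia); rewrite /= end.

Section PentanomialRemainder.
Variables (R : fieldType) (b c : nat) (D : {poly R}).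
Local Notation m := (2 * b + c)%N.
Hypotheses (R_char2 : 2 \in [pchar R]) (hcb : (c < b)%N) (hc : (1 < c)%N)
           (size_D : (size D <= 2 * m - 1)%N).

Definition quot_coef i := D`_(m + i) + D`_(m + (i + b)) + D`_(m + (i + (b + c))).
Definition rem_coef j :=
  D`_j + quot_coef j + (if (c <= j)%N then quot_coef (j - c) else 0)
  + (if (b <= j)%N then quot_coef (j - b) else 0)
  + (if (b + c <= j)%N then quot_coef (j - (b + c)) else 0).

Let coef_high i : (2 * m - 1 <= i)%N -> D`_i = 0.
Proof. by move=> i_ge; apply: nth_default; apply: leq_trans i_ge. Qed.

(* Erases the coefficients beyond the degree bound and identifies those whose
   indices are provably equal despite truncated subtraction; each one is then
   abstracted so that it is compared only once. *)
Ltac normalize_coefs :=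
  repeat match goal with |- context [nth ?z (polyseq D) ?i] =>
    first [ rewrite (@coef_high i); [|lia]
          | repeat match goal with |- context [nth _ (polyseq D) ?k] =>
              assert_fails (constr_eq i k); rewrite (_ : k = i); [|lia] end;
            let t := fresh "t" in move: (nth z (polyseq D) i) => t ]
  end.

Lemma xeval_sum_bc i :
  xeval +%R (fun i => D`_i) (sum_bc b c i) = D`_(m + i) + D`_(m + (i + (b + c))).
Proof.
rewrite /sum_bc; case: ifP => //= /negbT i_ge.
by rewrite (@coef_high (m + (i + (b + c)))) ?addr0 //; lia.
Qed.

Lemma out_sum_eval j : (j < m)%N -> xeval +%R (fun i => D`_i) (out_sum b c j) = rem_coef j.
Proof.
move=> j_lt.
rewrite /out_sum /low_sum /top_term /low_term /cross_sum /sum_b /high /rem_coef /quot_coef.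
by split_ifs; rewrite ?xeval_sum_bc; normalize_coefs; pchar2_cancel R_char2.
Qed.

Lemma quot_coef_eq0 i : (m - 1 <= i)%N -> quot_coef i = 0.
Proof. by move=> i_ge; rewrite /quot_coef !coef_high ?addr0 //; lia. Qed.

Lemma quot_coef_rec t : (m <= t)%N ->
  D`_t = quot_coef (t - m) + quot_coef (t - (b + c)) + quot_coef (t - b) + quot_coef (t - c).
Proof. by move=> t_ge; rewrite /quot_coef; normalize_coefs; pchar2_cancel R_char2. Qed.

Local Notation pent := ('X^m + 'X^(b + c) + 'X^b + 'X^c + 1 : {poly R}).
Local Notation quot := (\poly_(i < m) quot_coef i).

Lemma coef_quot i : quot`_i = quot_coef i.
Proof. by rewrite coef_poly; case: ltnP => // i_ge; rewrite quot_coef_eq0 //; lia. Qed.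

Lemma size_pent : (m < size pent)%N.
Proof.
have m_neq k : (k < m)%N -> (m == k) = false by move=> ?; apply/eqP; lia.
rewrite ltnNge; apply/leq_sizeP => /(_ m (leqnn m)) /eqP.
by rewrite !coefD !coefXn coef1 eqxx !m_neq ?addr0 ?oner_eq0 //; lia.
Qed.

Lemma pent_div_eq : D = quot * pent + \poly_(j < m) rem_coef j.
Proof.
apply/polyP => t; rewrite !mulrDr mulr1 !coefD !coefMXn !coef_quot coef_poly.
case: (ltnP t m) => t_m.
  by rewrite /rem_coef; split_ifs; pchar2_cancel R_char2.
split_ifs; rewrite (@quot_coef_eq0 t) ?addr0; last by lia.
exact: quot_coef_rec.
Qed.

Lemma pent_modp_coef j : (j < m)%N -> (D %% pent)`_j = rem_coef j.
Proof.
move=> j_lt; rewrite {1}pent_div_eq modp_addl_mul_small ?coef_poly ?j_lt //.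
exact: leq_ltn_trans (size_poly _ _) size_pent.
Qed.

End PentanomialRemainder.

Theorem theorem2 (b c : nat) (hcb : (c < b)%N) (hc : (1 < c)%N) :
  let m := (2 * b + c)%N in
  exists P : slp,
    [/\ slp_wf (2 * m - 1) P,
        size (slp_outs P) = m,
        slp_xors P = (6 * b + 3 * c - 2)%N,
        slp_depth (2 * m - 1) P = 3%N &
        forall D : {poly 'F_2}, (size D <= 2 * m - 1)%N ->
          forall j, (j < m)%N ->
            slp_out (2 * m - 1) P (fun i => D`_i) j = (D %% pentanomial b c)`_j].
Proof.
move=> m; exists (pent_reducer b c); split.
- exact: pent_reducer_wf.
- by rewrite !size_map size_iota.
- exact: pent_reducer_xors.
- exact: pent_reducer_depth.
move=> D size_D j j_lt; have F2_char2 : 2 \in [pchar 'F_2] by apply: pchar_Fp.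
by rewrite pent_reducer_out // out_sum_eval ?pent_modp_coef.
Qed.
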